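(* Let $\ell\ge 2$ and $n_1,\dots,n_\ell$ be positive integers, and let $G$ be the xor-product of the complete graphs $K_{n_1},\dots,K_{n_\ell}$. Then $\omega(G)\le n_1+\dots+n_\ell-\ell+1$.
   Context: The xor-product of graphs $G_1,\dots,G_\ell$ has vertex set $V(G_1)\times\dots\times V(G_\ell)$, two vertices $(g_1,\dots,g_\ell)$ and $(g'_1,\dots,g'_\ell)$ being adjacent iff the number of indices $i$ with $g_ig'_i\in E(G_i)$ is odd. $\omega$ denotes the clique number. *)

From mathcomp Require Import all_boot.
Set Implicit Arguments. Unset Strict Implicit. Unset Printing Implicit Defensive.

(* A simple graph on a finite type T is given by an adjacency relation
   (assumed symmetric and irreflexive where needed). *)

Definition complete_adj (n : nat) : rel 'I_n := fun x y => x != y.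

Definition xor_vertex (l : nat) (V : 'I_l -> finType) :=
  {dffun forall i : 'I_l, V i}.

Definition xor_adj (l : nat) (V : 'I_l -> finType)
    (E : forall i, rel (V i)) : rel (xor_vertex V) :=
  fun g g' => odd #|[pred i : 'I_l | E i (g i) (g' i)]|.

Definition is_clique (T : finType) (e : rel T) (K : {set T}) : bool :=
  [forall x in K, forall y in K, (x != y) ==> e x y].

Definition clique_number (T : finType) (e : rel T) : nat :=
  \max_(K : {set T} | is_clique e K) #|K|.

From mathcomp Require Import all_boot.
Set Implicit Arguments. Unset Strict Implicit. Unset Printing Implicit Defensive.

(* Over GF(2), non-adjacency in the xor-product of complete graphs is an
   affine function of the one-hot features [x_i == a] (i < l, 0 < a < n_i):
   [g_i != x_i] = [g_i != 0] + sum_(a != 0) [g_i = 0 or g_i = a] [x_i = a].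
   On a clique K these |K| functions restrict to the indicators of the points
   of K, so the 2^|K| sums over subsets of K are pairwise distinct functions;
   all of them lie in an affine span of dimension sum_i (n_i - 1), whence
   2^|K| <= 2^(sum_i (n_i - 1) + 1). *)

Lemma odd_card_big_addb (T : finType) (P : pred T) :
  odd #|[pred i | P i]| = \big[addb/false]_i P i.
Proof.
rewrite -sum1_card (big_morph odd oddD (erefl (odd 0))) big_mkcond.
by apply: eq_bigr => i _; rewrite inE; case: (P i).
Qed.

Lemma big_addb_eq1 (T : finType) (Q : pred T) (y : T) :
  \big[addb/false]_(a | Q a) (y == a) = Q y.
Proof.
have [Qy | nQy] := boolP (Q y).
- rewrite (bigD1 y) //= eqxx big1 // => a /andP[_ /negbTE].
  by rewrite eq_sym.
- by apply/negbTE; rewrite big1 // => a Qa; apply: contraNF nQy => /eqP ->.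
Qed.

Section AffineRank.

Variables (T X : finType) (P : {set X}).
Variables (f : T -> T -> bool) (c0 : T -> bool) (c phi : T -> X -> bool).

Hypothesis f_affine :
  forall g x, f g x = c0 g (+) \big[addb/false]_(p in P) (c g p && phi x p).

Definition span_coef (S : {set T}) : bool * {set X} :=
  (\big[addb/false]_(g in S) c0 g,
   [set p in P | \big[addb/false]_(g in S) c g p]).

Lemma big_addb_affine (S : {set T}) x :
  \big[addb/false]_(g in S) f g x =
  (span_coef S).1 (+) \big[addb/false]_(p in (span_coef S).2) phi x p.
Proof.
under eq_bigr do rewrite f_affine.
rewrite big_split /= exchange_big /=; congr (_ (+) _).
rewrite big_mkcond [RHS]big_mkcond; apply: eq_bigr => p _.
by rewrite inE -big_distrl /=; case: (p \in P).
Qed.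

Variable K : {set T}.
Hypothesis f_diag : {in K &, forall g h, f g h = (g == h)}.

Lemma big_addb_diag (S : {set T}) h :
  S \subset K -> h \in K -> \big[addb/false]_(g in S) f g h = (h \in S).
Proof.
move=> sSK hK; rewrite (eq_bigr (fun g => g == h)); last first.
  by move=> g gS; apply: f_diag => //; apply: (subsetP sSK).
by under eq_bigr do rewrite eq_sym; rewrite big_addb_eq1.
Qed.

Lemma span_coef_inj : {in powerset K &, injective span_coef}.
Proof.
move=> S S'; rewrite !inE => sSK sS'K eq_coef; apply/setP => h.
have [hK | hK] := boolP (h \in K).
  by rewrite -(big_addb_diag sSK hK) -(big_addb_diag sS'K hK)
             !big_addb_affine eq_coef.
have notin_sub (A : {set T}) : A \subset K -> (h \in A) = false.
  by move=> sAK; apply: contraNF hK => /(subsetP sAK).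
by rewrite !notin_sub.
Qed.

Lemma card_le_affine_span : #|K| <= #|P|.+1.
Proof.
have sub_span : span_coef @: powerset K \subset setX [set: bool] (powerset P).
  apply/subsetP => _ /imsetP[S _ ->]; rewrite in_setX in_setT inE.
  by apply/subsetP => p; rewrite inE => /andP[].
have := subset_leq_card sub_span.
rewrite card_in_imset; last exact: span_coef_inj.
by rewrite card_powerset cardsX cardsT card_bool card_powerset -expnS leq_exp2l.
Qed.

End AffineRank.

Lemma neq_ord_affine m (b x : 'I_m) :
  (b != x) = (val b != 0) (+)
    \big[addb/false]_(a : 'I_m | val a != 0)
      (((val b == 0) || (b == a)) && (x == a)).
Proof.
have [b0 | bn0] := eqVneq (val b) 0.
- rewrite /= big_addb_eq1; congr negb.
  by rewrite -val_eqE b0 eq_sym.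
- rewrite (eq_bigr (fun a => (b == x) && (b == a))); last first.
    move=> a _; have [<- | _] := eqVneq b a; last by rewrite andbF.
    by rewrite andbT eq_sym.
  by rewrite -big_distrr /= big_addb_eq1 bn0 andbT.
Qed.

Section XorCompleteGraphs.

Variables (l : nat) (n : 'I_l -> nat).

Local Notation vertex := (xor_vertex (fun i : 'I_l => 'I_(n i))).
Local Notation adj := (xor_adj (fun i => @complete_adj (n i))).
Local Notation feature := {i : 'I_l & 'I_(n i)}.

Definition nonzero_features : {set feature} := [set p | val (tagged p) != 0].

Definition feature_coef (g : vertex) (p : feature) : bool :=
  (val (g (tag p)) == 0) || (g (tag p) == tagged p).

Lemma not_xor_adj_affine (g x : vertex) :
  ~~ adj g x =
  (~~ \big[addb/false]_(i < l) (val (g i) != 0)) (+)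
  \big[addb/false]_(p in nonzero_features)
     (feature_coef g p && (x (tag p) == tagged p)).
Proof.
rewrite /xor_adj odd_card_big_addb addNb; congr negb.
under eq_bigr => i _ do rewrite /complete_adj /= neq_ord_affine.
rewrite big_split /=; congr (_ (+) _).
rewrite (sig_big_dep _ (fun i (a : 'I_(n i)) => val a != 0)
  (fun i (a : 'I_(n i)) => ((val (g i) == 0) || (g i == a)) && (x i == a))).
by apply: eq_bigl => p; rewrite inE.
Qed.

Lemma card_nonzero_ord m : #|[pred a : 'I_m | val a != 0]| = m.-1.
Proof.
case: m => [|m]; first by apply: eq_card0 => -[].
by rewrite (@eq_card _ _ (predC1 ord0)) ?cardC1 ?card_ord.
Qed.

Lemma card_nonzero_features : #|nonzero_features| = \sum_(i < l) (n i).-1.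
Proof.
rewrite -sum1_card (eq_bigl (fun p : feature => true && (val (tagged p) != 0))); last first.
  by move=> p; rewrite inE.
rewrite -(sig_big_dep xpredT (fun i (a : 'I_(n i)) => val a != 0) (fun _ _ => 1)).
by apply: eq_bigr => i _; rewrite sum1_card card_nonzero_ord.
Qed.

End XorCompleteGraphs.

Theorem theorem3p1 (l : nat) (n : 'I_l -> nat) :
  2 <= l -> (forall i, 0 < n i) ->
  clique_number (xor_adj (V := fun i => 'I_(n i)) (fun i => @complete_adj (n i)))
    <= (\sum_(i < l) n i) - l + 1.
Proof.
move=> _ n_gt0; apply/bigmax_leqP => K /forallP cliqueK.
have nonadj_diag : {in K &, forall g h,
    ~~ xor_adj (fun i => @complete_adj (n i)) g h = (g == h)}.
  move=> g h gK hK; have [<- | gh] := eqVneq g h.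
    by rewrite /xor_adj /complete_adj eq_card0 // => i; rewrite !inE eqxx.
  by move: (cliqueK g); rewrite gK => /forallP/(_ h); rewrite hK gh /= => ->.
apply: leq_trans (card_le_affine_span (@not_xor_adj_affine l n) nonadj_diag) _.
have sum_n : \sum_(i < l) n i = \sum_(i < l) (n i).-1 + l.
  rewrite (eq_bigr (fun i => (n i).-1 + 1)) => [|i _]; last by rewrite addn1 prednK.
  by rewrite big_split /= sum1_card card_ord.
by rewrite card_nonzero_features sum_n addnK addn1.
Qed.
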